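(* Let $I$ be a closed interval of positive length, and let $\alpha:I\to S^{k-1}\subseteq\mathbb{R}^k$, $\alpha(s)=(\alpha_1(s),\dots,\alpha_k(s))$, be a continuous, nonconstant path. Define $D_\alpha:I\to\mathbb{Z}$ by $D_\alpha(s)=\dim_{\mathbb{Q}}\{\beta\in\mathbb{Q}^k:\beta\cdot\alpha(s)=0\}$. Then $D_\alpha$ is not constant. *)

From HB Require Import structures.
From mathcomp Require Import all_boot all_order all_algebra.
From mathcomp Require Import all_classical all_reals all_analysis.
Set Implicit Arguments. Unset Strict Implicit. Unset Printing Implicit Defensive.
Import Order.TTheory GRing.Theory Num.Theory.
Import numFieldNormedType.Exports.
Local Open Scope ring_scope.

Definition rdot (R : realType) (k : nat) (beta : 'rV[rat]_k) (a : 'rV[R]_k) : R :=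
  \sum_(i < k) ratr (beta 0 i) * a 0 i.

Definition Qdim_ortho (R : realType) (k : nat) (a : 'rV[R]_k) (d : nat) : Prop :=
  (exists B : 'M[rat]_(d, k), row_free B /\ forall i, rdot (row i B) a = 0) /\
  (forall (d' : nat) (B : 'M[rat]_(d', k)),
      row_free B -> (forall i, rdot (row i B) a = 0) -> (d' <= d)%N).

Definition on_sphere (R : realType) (k : nat) (a : 'rV[R]_k) : Prop :=
  \sum_(i < k) a 0 i ^+ 2 = 1.

From HB Require Import structures.
From mathcomp Require Import all_boot all_order all_algebra.
From mathcomp Require Import all_classical all_reals all_analysis.
From mathcomp Require Import ring lra.
Import Order.TTheory GRing.Theory Num.Theory.
Import numFieldNormedType.Exports.
Local Open Scope classical_set_scope.
Local Open Scope ring_scope.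

(* Suppose D_alpha were constantly d and let W(s) = {beta | beta . alpha(s) = 0}.
   As every W(s) has dimension d, for each d-dimensional rational subspace V the
   set {s | W(s) = V} is {s | V <= W(s)}, which is closed by continuity. These
   countably many closed sets partition I, so by Sierpinski's theorem (proved
   with nested intervals) W is a constant V on I. But two distinct points of the
   sphere are strictly separated by a rational hyperplane,
   beta . alpha(s) < 0 < beta . alpha(t), and by the intermediate value theorem
   beta . alpha(u) = 0 for some u; then beta lies in W(u) = V = W(s),
   contradicting beta . alpha(s) <> 0. *)

Set Implicit Arguments.
Unset Strict Implicit.
Unset Printing Implicit Defensive.

Section RationalOrthogonality.
Variables (R : realType) (k : nat).

Definition ortho m (B : 'M[rat]_(m, k)) (v : 'rV[R]_k) :=
  map_mx ratr B *m v^T = 0.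

Lemma rdot_row m (B : 'M[rat]_(m, k)) (v : 'rV[R]_k) i :
  rdot (row i B) v = (map_mx ratr B *m v^T) i 0.
Proof. by rewrite /rdot !mxE; apply: eq_bigr => j _; rewrite !mxE. Qed.

Lemma orthoP m (B : 'M[rat]_(m, k)) (v : 'rV[R]_k) :
  ortho B v <-> forall i, rdot (row i B) v = 0.
Proof.
split => [oB i | oB]; first by rewrite rdot_row oB mxE.
by apply/matrixP => i j; rewrite (ord1 j) -rdot_row oB mxE.
Qed.

Lemma ortho_submx m n (A : 'M[rat]_(m, k)) (B : 'M[rat]_(n, k)) v :
  (A <= B)%MS -> ortho B v -> ortho A v.
Proof.
by move=> /submxP[D ->]; rewrite /ortho map_mxM -mulmxA => ->; rewrite mulmx0.
Qed.

Lemma ortho_col_mx m n (A : 'M[rat]_(m, k)) (B : 'M[rat]_(n, k)) v :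
  ortho A v -> ortho B v -> ortho (col_mx A B) v.
Proof. by rewrite /ortho map_col_mx mul_col_mx => -> ->; exact: col_mx0. Qed.

Lemma Qdim_ortho_exists (v : 'rV[R]_k) : exists d, Qdim_ortho v d.
Proof.
pose P d := `[< exists B : 'M[rat]_(d, k), row_free B /\ ortho B v >].
have P0 : exists d, P d.
  by exists 0%N; apply/asboolP; exists 0; rewrite /row_free mxrank0 /ortho flatmx0.
have Pk d : P d -> (d <= k)%N.
  by move=> /asboolP[B [/eqP rB _]]; rewrite -rB rank_leq_col.
have [d /asboolP[B [fB oB]] dmax] := ex_maxnP P0 Pk.
exists d; split; first by exists B; split => //; exact/orthoP.
move=> d' B' fB' /orthoP oB'; apply: dmax; apply/asboolP; by exists B'.
Qed.

Lemma ortho_rank_le_Qdim (v : 'rV[R]_k) d m (M : 'M[rat]_(m, k)) :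
  Qdim_ortho v d -> ortho M v -> (\rank M <= d)%N.
Proof.
move=> [_ dmax] oM; apply: (dmax _ (row_base M) (row_base_free M)).
by apply/orthoP; apply: ortho_submx oM; rewrite eq_row_base.
Qed.

Lemma Qdim_ortho_submx (v : 'rV[R]_k) d m n
    (A : 'M[rat]_(m, k)) (B : 'M[rat]_(n, k)) :
  Qdim_ortho v d -> \rank B = d -> ortho A v -> ortho B v -> (A <= B)%MS.
Proof.
move=> Qd rB oA oB.
have BBA : (B <= col_mx B A)%MS by rewrite -addsmxE addsmxSl.
have ABA : (A <= col_mx B A)%MS by rewrite -addsmxE addsmxSr.
have rBA := ortho_rank_le_Qdim Qd (ortho_col_mx oB oA).
have BAB : (col_mx B A <= B)%MS by rewrite -(geq_leqif (mxrank_leqif_sup BBA)) rB.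
exact: submx_trans ABA BAB.
Qed.

Lemma rdot_continuous (beta : 'rV[rat]_k) : continuous (rdot beta : 'rV[R]_k -> R).
Proof.
move=> x.
have -> : rdot beta = \sum_(i < k) (fun v : 'rV[R]_k => ratr (beta 0 i) * v 0 i).
  by apply/funext => v; rewrite fct_sumE.
apply: (@big_ind _ (fun f : 'rV[R]_k -> R => {for x, continuous f})).
- exact: cst_continuous.
- by move=> f g; apply: continuousD.
- move=> i _.
  apply: (@continuousM _ _ (fun=> ratr (beta 0 i)) (fun v : 'rV[R]_k => v 0 i)).
    exact: cst_continuous.
  exact: coord_continuous.
Qed.

Lemma closed_ortho m (B : 'M[rat]_(m, k)) : closed [set v : 'rV[R]_k | ortho B v].
Proof.
have -> : [set v | ortho B v] = \bigcap_i rdot (row i B) @^-1` [set 0].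
  apply/seteqP; split => [v /orthoP oB i _ | v oB]; first exact: oB.
  by apply/orthoP => i; exact: oB.
apply: closed_bigI => i _.
apply: (continuous_closedP _).1 (rdot_continuous (beta := row i B)) _ _.
exact: closed_eq.
Qed.

End RationalOrthogonality.

Lemma closed_within_preimage (T U : topologicalType) (A : set T) (D : set U)
    (f : T -> U) :
  closed A -> {within A, continuous f} -> closed D -> closed (A `&` f @^-1` D).
Proof.
by move=> cA fA cD; rewrite setIC closed_setIS //; exact: (continuous_closedP _).1.
Qed.

Section RealLine.
Variable R : realType.
Implicit Types (A : set R) (x y : R).

Lemma closed_last_point A x y : closed A -> A x -> x <= y ->
  exists s, [/\ x <= s <= y, A s & forall w, s < w <= y -> ~ A w].
Proof.
move=> cA Ax xy; set S := A `&` [set w | x <= w] `&` [set w | w <= y].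
have Sx : S x by rewrite /S /= lexx xy.
have ubS : ubound S y by move=> w [].
have hS : has_sup S by split; [exists x | exists y].
have SsupS : S (sup S).
  have cS : closed S by apply: closedI; first apply: closedI.
  by apply: cS; apply: closure_sup; [exists x | exists y].
have [[As xs] sy] := SsupS.
exists (sup S); split; [by rewrite xs sy | by [] |].
move=> w /andP[sw wy] Aw.
have : w <= sup S.
  by apply: sup_upper_bound => //; rewrite /S /= wy (le_trans xs (ltW sw)).
by rewrite leNgt sw.
Qed.

Lemma closed_first_point A x y : closed A -> A y -> x <= y ->
  exists t, [/\ x <= t <= y, A t & forall w, x <= w < t -> ~ A w].
Proof.
move=> cA Ay xy.
have cNA : closed [set w | A (- w)].
  exact: (continuous_closedP _).1 opp_continuous _ cA.
have NAy : [set w | A (- w)] (- y) by rewrite /= opprK.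
have Nxy : - y <= - x by rewrite lerN2.
have [s [/andP[ys sx] Ans last]] := closed_last_point cNA NAy Nxy.
exists (- s); split => [|//|w /andP[xw ws] Aw]; first by rewrite lerNr sx lerNl.
by apply: (last (- w)); rewrite /= ?opprK //; apply/andP; split; lra.
Qed.

Lemma closed_avoid_near A s : closed A -> ~ A s ->
  exists2 e, 0 < e & forall w, `|w - s| <= e -> ~ A w.
Proof.
move=> cA nAs.
have : nbhs s (~` A) by apply: open_nbhs_nbhs; split => //; exact: closed_openC.
move=> /nbhs_ballP[e /= e0 sub]; exists (e / 2) => [|w ws]; first exact: divr_gt0.
by apply: sub; rewrite /ball /= distrC; lra.
Qed.

Lemma nested_itv_meet (u v : nat -> R) :
  (forall n, u n <= u n.+1) -> (forall n, v n.+1 <= v n) -> (forall n, u n <= v n) ->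
  exists z, forall n, u n <= z <= v n.
Proof.
move=> /nondecreasing_seqP ui /nonincreasing_seqP vd uv.
have uv' n m : u n <= v m.
  by rewrite (le_trans (ui _ _ (leq_maxl n m))) // (le_trans (uv _)) // vd // leq_maxr.
have hu : has_sup (range u).
  by split; [exists (u 0%N), 0%N | exists (v 0%N) => _ [m _ <-]].
exists (sup (range u)) => n; apply/andP; split.
  by apply: sup_upper_bound => //; exists n.
by apply: ge_sup; [exists (u 0%N), 0%N | move=> _ [m _ <-]].
Qed.

Lemma itv_sign_change_root (f : R -> R) a b s t :
  {within `[a, b], continuous f} -> a <= s <= b -> a <= t <= b ->
  f s < 0 -> 0 < f t -> exists2 u, a <= u <= b & f u = 0.
Proof.
move=> fc Is It fs ft.
have /connected_intervalP fI : connected (f @` `[a, b]).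
  by apply: connected_continuous_connected fc; exact: segment_connected.
have [u Iu fu] : (f @` `[a, b]) 0.
  apply: (fI (f s) (f t)); last by rewrite !ltW.
    by exists s; rewrite ?in_itv.
  by exists t; rewrite ?in_itv.
by exists u; rewrite // -in_itv.
Qed.

End RealLine.

Section Sierpinski.
Variables (R : realType) (I : countType) (E : I -> set R) (a b : R).
Hypothesis closedE : forall i, closed (E i).
Hypothesis coverE : forall x, a <= x <= b -> exists i, E i x.
Hypothesis disjE : forall i j x, a <= x <= b -> E i x -> E j x -> i = j.

Definition straddle x y := [/\ a <= x, x < y, y <= b & forall i, E i x -> ~ E i y].

Lemma straddle_avoid_left x y n : straddle x y -> ~ E n x ->
  exists x' y', [/\ straddle x' y', x <= x', y' <= y &
    forall w, x' <= w <= y' -> ~ E n w].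
Proof.
case=> ax xy yb sep nEnx.
have [p Epx] : exists p, E p x by apply: coverE; rewrite ax (le_trans (ltW xy) yb).
have [s [/andP[xs sy] Eps last]] := closed_last_point (@closedE p) Epx (ltW xy).
have Is : a <= s <= b by rewrite (le_trans ax xs) (le_trans sy yb).
have nEns : ~ E n s by move=> Ens; apply: nEnx; rewrite (disjE Is Ens Eps).
have sy' : s < y by rewrite lt_neqAle sy andbT; apply: contraPneq (sep p Epx) => <-.
have [e e0 near] := closed_avoid_near (@closedE n) nEns.
have [r [sr ry rse]] : exists r, [/\ s < r, r <= y & r <= s + e].
  by exists (Num.min y (s + e)); rewrite lt_min !ge_min sy' !lexx orbT; split => //; lra.
exists s, r; split => //.
- split; [exact: le_trans ax xs | by [] | exact: le_trans ry yb | move=> i Eis Eir].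
  by apply: (last r); [rewrite sr | rewrite -(disjE Is Eis Eps)].
- by move=> w /andP[sw wr]; apply: near; rewrite ler_norml; apply/andP; split; lra.
Qed.

Lemma straddle_avoid_right x y n : straddle x y -> ~ E n y ->
  exists x' y', [/\ straddle x' y', x <= x', y' <= y &
    forall w, x' <= w <= y' -> ~ E n w].
Proof.
case=> ax xy yb sep nEny.
have [q Eqy] : exists q, E q y by apply: coverE; rewrite yb (le_trans ax (ltW xy)).
have [t [/andP[xt ty] Eqt first]] := closed_first_point (@closedE q) Eqy (ltW xy).
have It : a <= t <= b by rewrite (le_trans ax xt) (le_trans ty yb).
have nEnt : ~ E n t by move=> Ent; apply: nEny; rewrite (disjE It Ent Eqt).
have xt' : x < t.
  by rewrite lt_neqAle xt andbT; apply/eqP => ext; apply: (sep q); rewrite ?ext.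
have [e e0 near] := closed_avoid_near (@closedE n) nEnt.
have [r [xr rt ter]] : exists r, [/\ x <= r, r < t & t - e <= r].
  by exists (Num.max x (t - e)); rewrite gt_max !le_max xt' !lexx orbT; split => //; lra.
exists r, t; split => //.
- split; [exact: le_trans ax xr | by [] | exact: le_trans ty yb | move=> i Eir Eit].
  by apply: (first r); [rewrite xr | rewrite -(disjE It Eit Eqt)].
- by move=> w /andP[rw wt]; apply: near; rewrite ler_norml; apply/andP; split; lra.
Qed.

Lemma straddle_avoid x y n : straddle x y ->
  exists x' y', [/\ straddle x' y', x <= x', y' <= y &
    forall w, x' <= w <= y' -> ~ E n w].
Proof.
move=> st; have [Enx | nEnx] := pselect (E n x); last exact: straddle_avoid_left.
by apply: straddle_avoid_right => //; case: st => _ _ _ sep; exact: sep.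
Qed.

Lemma straddle_nested x y (f : nat -> I) : straddle x y ->
  exists u : nat -> R * R, [/\ u 0%N = (x, y),
    forall n, straddle (u n).1 (u n).2,
    forall n, (u n).1 <= (u n.+1).1, forall n, (u n.+1).2 <= (u n).2 &
    forall n w, (u n.+1).1 <= w <= (u n.+1).2 -> ~ E (f n) w].
Proof.
move=> st0.
have step (nxy : nat * (R * R)) : exists xy' : R * R,
    straddle nxy.2.1 nxy.2.2 -> [/\ straddle xy'.1 xy'.2, nxy.2.1 <= xy'.1,
      xy'.2 <= nxy.2.2 & forall w, xy'.1 <= w <= xy'.2 -> ~ E (f nxy.1) w].
  case: nxy => n [x' y'] /=.
  have [st | nst] := pselect (straddle x' y'); last by exists (x', y') => /nst.
  by have [x'' [y'' avoid]] := straddle_avoid (f n) st; exists (x'', y'').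
have [g gP] := choice step.
pose u := fix u n := if n is m.+1 then g (m, u m) else (x, y).
have ust n : straddle (u n).1 (u n).2.
  by elim: n => [|n IH] //=; have [] := gP (n, u n) IH.
by exists u; split => // n; have [] := gP (n, u n) (ust n).
Qed.

Theorem sierpinski_interval : a <= b -> exists i, forall x, a <= x <= b -> E i x.
Proof.
move=> ab; have [p Epa] : exists p, E p a by apply: coverE; rewrite lexx ab.
apply: contrapT => /forallNP none.
have [y0 /andP[ay0 y0b] nEpy0] : exists2 y, a <= y <= b & ~ E p y.
  by have /existsNP[y /not_implyP[Iy nEpy]] := none p; exists y.
have st0 : straddle a y0.
  split => // [|i Eia Eiy0]; last by apply: nEpy0; rewrite -(disjE _ Eia Epa) // lexx ab.
  by rewrite lt_neqAle ay0 andbT; apply: contraPneq nEpy0 => <-.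
have [u [u0 ust ui ud uavoid]] := straddle_nested (fun n => odflt p (unpickle n)) st0.
have uu n : (u n).1 <= (u n).2 by case: (ust n) => _ /ltW.
have [z zu] := nested_itv_meet ui ud uu.
have [i Eiz] : exists i, E i z.
  apply: coverE; have := zu 0%N; rewrite u0 /= => /andP[-> zy0].
  exact: le_trans zy0 y0b.
by apply: (uavoid (pickle i) z (zu _)); rewrite pickleK.
Qed.

End Sierpinski.

Section RationalSeparation.
Variables (R : realType) (k : nat).

Lemma rat_approx_row (g : 'I_k -> R) e : 0 < e ->
  exists beta : 'rV[rat]_k, forall j, `|ratr (beta 0 j) - g j| < e.
Proof.
move=> e0.
have near_rat j : exists q : rat, `|ratr q - g j| < e.
  have [y [gy [q _ qy]]] := @dense_rat R (ball (g j) e)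
    (ex_intro _ (g j) (ballxx _ e0)) (ball_open _ _).
  by exists q; rewrite qy distrC.
have [f fP] := choice near_rat.
by exists (\row_j f j) => j; rewrite mxE.
Qed.

Lemma rdot_approx (beta : 'rV[rat]_k) (g : 'I_k -> R) (v : 'rV[R]_k) e :
  (forall j, `|ratr (beta 0 j) - g j| <= e) ->
  `|rdot beta v - \sum_j g j * v 0 j| <= e * \sum_j `|v 0 j|.
Proof.
move=> beta_g; rewrite /rdot -sumrB mulr_sumr.
apply: le_trans (ler_norm_sum _ _ _) (ler_sum _ _) => j _.
by rewrite -mulrBl normrM ler_wpM2r.
Qed.

Lemma sphere_chord_dot (v w : 'rV[R]_k) : on_sphere v -> on_sphere w -> v <> w ->
  \sum_j (w 0 j - v 0 j) * v 0 j < 0 < \sum_j (w 0 j - v 0 j) * w 0 j.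
Proof.
move=> sv sw vw; set D := \sum_j (w 0 j - v 0 j) ^+ 2.
have diffD : \sum_j (w 0 j - v 0 j) * w 0 j - \sum_j (w 0 j - v 0 j) * v 0 j = D.
  by rewrite -sumrB; apply: eq_bigr => j _; ring.
have sum0 : \sum_j (w 0 j - v 0 j) * w 0 j + \sum_j (w 0 j - v 0 j) * v 0 j = 0.
  rewrite -big_split /=.
  transitivity (\sum_j w 0 j ^+ 2 - \sum_j v 0 j ^+ 2); last by rewrite sw sv subrr.
  by rewrite -sumrB; apply: eq_bigr => j _; ring.
have D0 : 0 < D.
  rewrite lt_neqAle sumr_ge0 ?andbT => [|j _]; last exact: sqr_ge0.
  apply: contra_not_neq vw => /esym /psumr_eq0P D0; apply/matrixP => i j.
  rewrite (ord1 i); apply/eqP; rewrite eq_sym -subr_eq0 -sqrf_eq0 D0 // => l _.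
  exact: sqr_ge0.
by apply/andP; split; lra.
Qed.

Lemma rat_separation (v w : 'rV[R]_k) : on_sphere v -> on_sphere w -> v <> w ->
  exists beta : 'rV[rat]_k, rdot beta v < 0 < rdot beta w.
Proof.
move=> sv sw vw; have /andP[gv gw] := sphere_chord_dot sv sw vw.
set Sv := \sum_j _ * v 0 j in gv; set Sw := \sum_j _ * w 0 j in gw.
set Nv := \sum_j `|v 0 j|; set Nw := \sum_j `|w 0 j|.
have Nv0 : 0 <= Nv by rewrite sumr_ge0.
have Nw0 : 0 <= Nw by rewrite sumr_ge0.
have cv : Num.min (- Sv) Sw <= - Sv by rewrite ge_min lexx.
have cw : Num.min (- Sv) Sw <= Sw by rewrite ge_min lexx orbT.
set c := Num.min _ _ in cv cw.
have c0 : 0 < c by rewrite lt_min oppr_gt0 gv gw.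
pose e := c / (1 + Nv + Nw).
have e0 : 0 < e by rewrite divr_gt0 //; lra.
have ec : e * (1 + Nv + Nw) = c by rewrite divfK // gt_eqF //; lra.
have [beta beta_g] := rat_approx_row (fun j => w 0 j - v 0 j) e0.
have := rdot_approx (g := fun j => w 0 j - v 0 j) v (fun j => ltW (beta_g j)).
rewrite ler_norml -/Sv -/Nv => /andP[_ hv].
have := rdot_approx (g := fun j => w 0 j - v 0 j) w (fun j => ltW (beta_g j)).
rewrite ler_norml -/Sw -/Nw => /andP[hw _].
by exists beta; apply/andP; split; nra.
Qed.

Lemma rdot_within_continuous (beta : 'rV[rat]_k) (A : set R) (f : R -> 'rV[R]_k) :
  {within A, continuous f} -> {within A, continuous (fun x => rdot beta (f x))}.
Proof.
move=> fc x.
apply: (@continuous_comp _ _ _ (f : subspace A -> _) (rdot beta) x (fc x)).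
exact: rdot_continuous.
Qed.

End RationalSeparation.

Lemma Qdim_constant_ortho_space (R : realType) (k : nat) (a b : R)
    (alpha : R -> 'rV[R]_k) d :
  a <= b -> {within `[a, b], continuous alpha} ->
  (forall x, a <= x <= b -> Qdim_ortho (alpha x) d) ->
  exists S : 'M[rat]_k, \rank S = d /\ forall x, a <= x <= b -> ortho S (alpha x).
Proof.
move=> ab alpha_cont Qd.
(* A subspace is indexed by its canonical spanning matrix <<S>>, so equal
   subspaces have equal indices and the pieces below are pairwise disjoint. *)
pose I := {S : 'M[rat]_k | (<<S>>%MS == S) && (\rank S == d)}.
pose E (S : I) := `[a, b] `&` alpha @^-1` [set v | ortho (val S) v].
have closedE S : closed (E S).
  apply: closed_within_preimage _ alpha_cont (closed_ortho (B := val S)).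
  exact: (@interval_closed R (BLeft a) (BRight b)).
have coverE x : a <= x <= b -> exists S, E S x.
  move=> Ix; have [[B [fB oB]] _] := Qd x Ix.
  have SI : (<<<<B>>%MS>>%MS == <<B>>%MS) && (\rank <<B>>%MS == d).
    by rewrite genmx_id mxrank_gen (eqP fB) !eqxx.
  exists (exist _ <<B>>%MS SI); split; first by rewrite /= in_itv.
  have genB : (<<B>> <= B)%MS by rewrite genmxE.
  by apply: ortho_submx genB _; apply/orthoP.
have disjE S1 S2 x : a <= x <= b -> E S1 x -> E S2 x -> S1 = S2.
  case: S1 S2 => [S SI] [T TI] Ix [_ /= oS] [_ /= oT]; apply/val_inj => /=.
  case/andP: SI => /eqP gS /eqP rS; case/andP: TI => /eqP gT /eqP rT.
  rewrite -gS -gT; apply/genmxP/andP.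
  by split; [exact: Qdim_ortho_submx (Qd x Ix) rT oS oT
            | exact: Qdim_ortho_submx (Qd x Ix) rS oT oS].
have [[S SI] ES] := sierpinski_interval closedE coverE disjE ab.
have /andP[_ /eqP rS] := SI.
by exists S; split => // x Ix; have [] := ES x Ix.
Qed.

Theorem mainTheorem7 (R : realType) (k : nat) (a b : R) (alpha : R -> 'rV[R]_k) :
  a < b ->
  {within `[a, b], continuous alpha} ->
  (forall s, a <= s <= b -> on_sphere (alpha s)) ->
  (exists s t, [/\ a <= s <= b, a <= t <= b & alpha s <> alpha t]) ->
  exists s t d1 d2, [/\ a <= s <= b, a <= t <= b,
    Qdim_ortho (alpha s) d1, Qdim_ortho (alpha t) d2 & d1 <> d2].
Proof.
move=> ab alpha_cont sphere [s [t [Is It alpha_st]]].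
apply: contrapT => D_const.
have [d Qd] : exists d, forall x, a <= x <= b -> Qdim_ortho (alpha x) d.
  have [d Qda] := Qdim_ortho_exists (alpha a).
  exists d => x Ix; have [d' Qdx] := Qdim_ortho_exists (alpha x).
  have Ia : a <= a <= b by rewrite lexx ltW.
  suff <- : d' = d by [].
  by apply: contrapT => d'd; apply: D_const; exists x, a, d', d.
have [S [rS oS]] := Qdim_constant_ortho_space (ltW ab) alpha_cont Qd.
have [beta /andP[beta_s beta_t]] := rat_separation (sphere s Is) (sphere t It) alpha_st.
have beta_cont := rdot_within_continuous (beta := beta) alpha_cont.
have [u Iu beta_u] := itv_sign_change_root beta_cont Is It beta_s beta_t.
have betaS : (beta <= S)%MS.
  by apply: Qdim_ortho_submx (Qd u Iu) rS _ (oS u Iu); apply/orthoP => i; rewrite row_id.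
have /orthoP/(_ 0) := ortho_submx betaS (oS s Is).
by rewrite row_id => beta_s0; move: beta_s; rewrite beta_s0 ltxx.
Qed.
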